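(* Let $n\ge 2$ and let $A$, $B$ be $n$-dimensional boxes with closed side lengths $a_1\le\dots\le a_n$ and $b_1\le\dots\le b_n$. Suppose that $A$, in some state, fits inside $B$ in its closed state, and that $B$, in some state, fits inside $A$ in some state $\sigma$. Then in the state $\sigma$ the box $A$ is expanded along a side of closed length $a_1$ (its smallest side), and the expanded length exceeds all other side lengths of $A$, i.e. the expanded smallest side becomes the largest side of $A$.
   Context: A state of an $n$-dimensional box $A$ with closed side lengths $a_1\le\dots\le a_n$ is either closed or expanded along one side $i$: $a_i$ is replaced by $a_i'$ with $a_i\le a_i'\le 2a_i$, other sides unchanged (only one side can expand). The dimension vector of a state is its multiset of side lengths sorted in non-decreasing order. A box $X$ in some state fits inside a box $Y$ in some state if each coordinate of the dimension vector of $Y$ is strictly larger than the corresponding coordinate of that of $X$. *)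

From mathcomp Require Import all_boot all_order all_algebra.
Set Implicit Arguments. Unset Strict Implicit. Unset Printing Implicit Defensive.
Import Order.TTheory GRing.Theory Num.Theory.
Local Open Scope ring_scope.

Section Boxes.
Variables (R : realFieldType) (n : nat).

(* A box is given by its closed side lengths a : 'I_n -> R.
   s is a state of the box a: either closed (s = a), or expanded along
   exactly one side i, with a i <= s i <= 2 a i and the other sides unchanged. *)
Definition is_state (a s : 'I_n -> R) : Prop :=
  s = a \/
  exists i : 'I_n, a i <= s i <= 2 * a i /\ (forall j : 'I_n, j != i -> s j = a j).

Definition dimvec (s : 'I_n -> R) : seq R :=
  sort <=%R [seq s i | i <- enum 'I_n].

Definition fits (s t : 'I_n -> R) : Prop :=
  forall k : 'I_n, nth 0 (dimvec s) k < nth 0 (dimvec t) k.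

End Boxes.

(* Expanding a side never shrinks a box, and fitting strictly increases both the
   smallest and the largest entry of the dimension vector.  Along the chain
   A <= sA < B <= sB < sigma, the smallest and the largest side of sigma
   therefore strictly exceed those of A.  Since sigma changes a single side i,
   a side of A of minimal length left unchanged would keep the minimum, so i is
   a smallest side of A; likewise the maximum of sigma must be attained at i,
   so sigma i exceeds every side of A. *)
From mathcomp Require Import all_boot all_order all_algebra.
Import Order.TTheory GRing.Theory Num.Theory.
Local Open Scope ring_scope.
Set Implicit Arguments. Unset Strict Implicit.

Section DimensionVector.
Variables (R : realFieldType) (n : nat).
Hypothesis n_gt0 : (0 < n)%N.
Implicit Types a s t : 'I_n -> R.

Definition min_dim s := nth 0 (dimvec s) 0.
Definition max_dim s := nth 0 (dimvec s) n.-1.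

Lemma size_dimvec s : size (dimvec s) = n.
Proof. by rewrite /dimvec size_sort size_map size_enum_ord. Qed.

Lemma mem_dimvec s j : s j \in dimvec s.
Proof. by rewrite /dimvec mem_sort map_f ?mem_enum. Qed.

Lemma nth_dimvec_mem s k : (k < n)%N -> exists j, nth 0 (dimvec s) k = s j.
Proof.
move=> lt_kn.
have : nth 0 (dimvec s) k \in dimvec s by rewrite mem_nth ?size_dimvec.
by rewrite /dimvec mem_sort => /mapP [j _ ->]; exists j.
Qed.

Lemma nth_dimvec_mono s k l : (k <= l)%N -> (l < n)%N ->
  nth 0 (dimvec s) k <= nth 0 (dimvec s) l.
Proof.
move=> le_kl lt_ln; apply: (sorted_leq_nth le_trans lexx) => //.
- exact/sort_sorted/le_total.
- by rewrite inE size_dimvec (leq_ltn_trans le_kl).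
- by rewrite inE size_dimvec.
Qed.

Lemma min_dim_le s j : min_dim s <= s j.
Proof.
have := mem_dimvec s j; rewrite -index_mem size_dimvec => lt_jn.
by rewrite -(nth_index 0 (mem_dimvec s j)) nth_dimvec_mono.
Qed.

Lemma le_max_dim s j : s j <= max_dim s.
Proof.
have := mem_dimvec s j; rewrite -index_mem size_dimvec => lt_jn.
rewrite -(nth_index 0 (mem_dimvec s j)) nth_dimvec_mono //.
  by rewrite -ltnS prednK // (leq_ltn_trans _ lt_jn).
by rewrite prednK // (leq_ltn_trans _ lt_jn).
Qed.

Lemma min_dimP s : exists j, min_dim s = s j.
Proof. exact: nth_dimvec_mem. Qed.

Lemma max_dimP s : exists j, max_dim s = s j.
Proof. by apply: nth_dimvec_mem; rewrite ltn_predL. Qed.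

Lemma min_dim_homo s t : (forall j, s j <= t j) -> min_dim s <= min_dim t.
Proof.
move=> le_st; have [j ->] := min_dimP t.
exact: le_trans (min_dim_le s j) (le_st j).
Qed.

Lemma max_dim_homo s t : (forall j, s j <= t j) -> max_dim s <= max_dim t.
Proof.
move=> le_st; have [j ->] := max_dimP s.
exact: le_trans (le_st j) (le_max_dim t j).
Qed.

Lemma fits_min_dim s t : fits s t -> min_dim s < min_dim t.
Proof. by move=> fits_st; apply: (fits_st (Ordinal n_gt0)). Qed.

Lemma fits_max_dim s t : fits s t -> max_dim s < max_dim t.
Proof. by move=> fits_st; apply: (fits_st (Ordinal _)); rewrite ltn_predL. Qed.

Lemma state_ge a s j : is_state a s -> a j <= s j.
Proof.
case=> [-> // | [i [/andP [le_ai _] others]]].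
by case: (eqVneq j i) => [-> // | /others ->].
Qed.

Lemma state_fits_min_dim a s t :
  is_state a s -> fits s t -> min_dim a < min_dim t.
Proof.
move=> st_as fits_st; apply: le_lt_trans (fits_min_dim fits_st).
by apply: min_dim_homo => j; apply: state_ge.
Qed.

Lemma state_fits_max_dim a s t :
  is_state a s -> fits s t -> max_dim a < max_dim t.
Proof.
move=> st_as fits_st; apply: le_lt_trans (fits_max_dim fits_st).
by apply: max_dim_homo => j; apply: state_ge.
Qed.

Lemma expanded_side_min a s i :
  (forall j, j != i -> s j = a j) -> min_dim a < min_dim s ->
  forall j, a i <= a j.
Proof.
move=> others lt_min j; have [k min_a] := min_dimP a.
have -> : i = k.
  apply/eqP; apply: contraTT lt_min; rewrite eq_sym => /others s_k.
  by rewrite -leNgt min_a -s_k min_dim_le.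
by rewrite -min_a min_dim_le.
Qed.

Lemma expanded_side_max a s i :
  (forall j, j != i -> s j = a j) -> max_dim a < max_dim s ->
  forall j, a j < s i.
Proof.
move=> others lt_max j; have [k max_s] := max_dimP s.
have <- : k = i.
  apply/eqP; apply: contraTT lt_max => /others s_k.
  by rewrite -leNgt max_s s_k le_max_dim.
by rewrite -max_s (le_lt_trans (le_max_dim a j)).
Qed.

End DimensionVector.

Theorem lemma8 (R : realFieldType) (n : nat) (hn : (2 <= n)%N)
  (a b : 'I_n -> R)
  (apos : forall i, 0 < a i) (bpos : forall i, 0 < b i)
  (amono : forall i j : 'I_n, (i <= j)%N -> a i <= a j)
  (bmono : forall i j : 'I_n, (i <= j)%N -> b i <= b j)
  (hAB : exists sA, is_state a sA /\ fits sA b)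
  (sigma : 'I_n -> R) (hsigma : is_state a sigma)
  (hBA : exists sB, is_state b sB /\ fits sB sigma) :
  exists i : 'I_n,
    (forall j : 'I_n, a i <= a j) /\
    (forall j : 'I_n, j != i -> sigma j = a j) /\
    (forall j : 'I_n, j != i -> a j < sigma i).
Proof.
have n_gt0 : (0 < n)%N := ltnW hn.
have [sA [st_a fits_a]] := hAB; have [sB [st_b fits_b]] := hBA.
have lt_min : min_dim a < min_dim sigma.
  exact: lt_trans (state_fits_min_dim n_gt0 st_a fits_a)
                  (state_fits_min_dim n_gt0 st_b fits_b).
have lt_max : max_dim a < max_dim sigma.
  exact: lt_trans (state_fits_max_dim n_gt0 st_a fits_a)
                  (state_fits_max_dim n_gt0 st_b fits_b).
case: hsigma => [sigma_a | [i [_ others]]].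
  by rewrite sigma_a ltxx in lt_min.
exists i; split; first exact: expanded_side_min others lt_min.
by split=> // j _; apply: expanded_side_max others lt_max j.
Qed.
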